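(* Let $T\in(\mathbb{C}^n)^{\otimes3}$ be a symmetric tensor with $T=\sum_{i=1}^r u_i^{\otimes3}$, where $u_1,\dots,u_r\in\mathbb{C}^n$ are linearly independent. Let $T_1,\dots,T_n$ be the slices of $T$, let $S\subset\mathbb{C}$ be a finite set, pick $\alpha_1,\dots,\alpha_n$ uniformly and independently at random from $S$, and set $T^{(\alpha)}=\sum_{i=1}^n\alpha_iT_i$. Let $T^{(\alpha)}=P_r\Sigma Q_r^*$ be a compact singular value decomposition, and let $p_1,\dots,p_r$ be the columns of $P_r$. Then, with probability at least $1-\frac{r}{|S|}$, $P_r$ is a semi-unitary $n\times r$ matrix with $\mathrm{span}\{p_1,\dots,p_r\}=\mathrm{span}\{u_1,\dots,u_r\}$.
   Context: The $k$-th slice of $T=(T_{ijk})$ is $T_k=(T_{ijk})_{i,j}$. A matrix $P\in\mathbb{C}^{n\times r}$ is semi-unitary if $P^*P=I_r$. For a matrix $M\in\mathbb{C}^{m\times n}$ of rank $s$, a compact singular value decomposition is a factorization $M=U_s\Sigma_sV_s^*$ with $\Sigma_s$ an $s\times s$ diagonal matrix with positive diagonal entries and $U_s\in\mathbb{C}^{m\times s}$, $V_s\in\mathbb{C}^{n\times s}$ semi-unitary. *)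

From HB Require Import structures.
From mathcomp Require Import all_boot all_order all_algebra.
From mathcomp Require Import complex.
From mathcomp Require Import boolp reals.
Set Implicit Arguments. Unset Strict Implicit. Unset Printing Implicit Defensive.
Import Order.TTheory GRing.Theory Num.Theory.
Local Open Scope ring_scope.

Definition ctrmx (R : realType) m n (A : 'M[R[i]]_(m, n)) : 'M[R[i]]_(n, m) :=
  (map_mx (@conjc R) A)^T.

Definition semi_unitary (R : realType) n s (P : 'M[R[i]]_(n, s)) : Prop :=
  ctrmx P *m P = 1%:M.

Definition compact_svd (R : realType) m n s (M : 'M[R[i]]_(m, n))
  (P : 'M[R[i]]_(m, s)) (d : 'rV[R[i]]_s) (Q : 'M[R[i]]_(n, s)) : Prop :=
  [/\ \rank M = s, (forall j, 0 < d 0 j), semi_unitary P, semi_unitary Q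
    & M = P *m diag_mx d *m ctrmx Q].

Definition tensor3 (R : realType) n := 'I_n -> 'I_n -> 'I_n -> R[i].

Definition slice (R : realType) n (T : tensor3 R n) (k : 'I_n) : 'M[R[i]]_n :=
  \matrix_(a, b) T a b k.

Definition tensor_comb (R : realType) n (T : tensor3 R n) (alpha : 'I_n -> R[i])
  : 'M[R[i]]_n := \sum_(k < n) alpha k *: slice T k.

(* the event of the theorem: for every compact SVD T^(alpha) = P_s Sigma Q_s^*,
   s = r, P is semi-unitary n x r, and span(cols P) = span(cols U) *)
Definition good_event (R : realType) n r (U : 'M[R[i]]_(n, r)) (M : 'M[R[i]]_n)
  : Prop :=
  forall s (P : 'M[R[i]]_(n, s)) d (Q : 'M[R[i]]_(n, s)),
    compact_svd M P d Q ->
    [/\ s = r, semi_unitary P & (P^T == U^T)%MS].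

From HB Require Import structures.
From mathcomp Require Import all_boot all_order all_algebra.
From mathcomp Require Import complex.
From mathcomp Require Import boolp reals.
From mathcomp Require Import ring.
Set Implicit Arguments. Unset Strict Implicit. Unset Printing Implicit Defensive.
Import Order.TTheory GRing.Theory Num.Theory.
Local Open Scope ring_scope.

(* Each slice is T_k = U diag(U_k1, ..., U_kr) U^T, so T^(alpha) = U diag(alpha^T U) U^T.
   When every entry of alpha^T U is nonzero, T^(alpha) is symmetric with column
   space col(U) and rank r, and the left factor of any compact SVD spans exactly
   that space.  The l-th entry of alpha^T U is a linear form in alpha with a
   nonzero coefficient (U has full column rank), so it vanishes for at most a
   fraction 1/|S| of the choices of alpha; a union bound over l concludes. *)

Section FieldMatrices.
Variable F : fieldType.

Lemma eqmx_mul_diag_trmx n r (U : 'M[F]_(n, r)) (b : 'rV[F]_r) :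
  \rank U = r -> (forall l, b 0 l != 0) -> (U *m diag_mx b *m U^T :=: U^T)%MS.
Proof.
move=> rankU b_neq0; apply: eqmxMfull.
have b_free : row_free (diag_mx b).
  by rewrite row_free_unit unitmxE det_diag unitfE; apply/prodf_neq0.
by rewrite /row_full mxrankMfree // rankU.
Qed.

Lemma eqmx_left_factor m n s (M : 'M[F]_(m, n)) (P : 'M[F]_(m, s)) N :
  \rank M = s -> M = P *m N -> (P^T :=: M^T)%MS.
Proof.
move=> rankM defM; have MP : (M^T <= P^T)%MS by rewrite defM trmx_mul submxMl.
apply/eqmxP; rewrite -(geq_leqif (mxrank_leqif_sup MP)) !mxrank_tr rankM.
by rewrite rank_leq_col.
Qed.

Lemma full_col_rank_entry_neq0 n r (U : 'M[F]_(n, r)) l :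
  \rank U = r -> exists k, U k l != 0.
Proof.
move=> rankU; apply/existsP; apply: contraT; rewrite negb_exists => /forallP U0.
have U_free : row_free U^T by rewrite /row_free mxrank_tr rankU.
have : (delta_mx 0 l : 'rV_r) *m U^T = 0 *m U^T.
  by apply/rowP => k; rewrite -rowE mul0mx !mxE; apply/eqP; rewrite -[_ == 0]negbK U0.
by move/(row_free_inj U_free)/matrixP/(_ 0 l); rewrite !mxE !eqxx => /eqP; rewrite oner_eq0.
Qed.

(* Once every coordinate but [k0] is fixed, the linear form vanishes at most
   once because [S] has no repeated values. *)
Lemma card_linear_form_eq0 n (S : seq F) (c : 'I_n -> F) k0 :
  uniq S -> c k0 != 0 ->
  (#|[set f : {ffun 'I_n -> 'I_(size S)} | (\sum_(k < n) nth 0 S (f k) * c k == 0)%R]|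
     * size S <= size S ^ n)%N.
Proof.
move=> uniqS ck0_neq0; set A := [set f | _].
pose restr (f : {ffun 'I_n -> 'I_(size S)}) := [ffun j : 'I_n.-1 => f (lift k0 j)].
have restr_inj : {in A &, injective restr}.
  move=> f g; rewrite !inE => /eqP f0 /eqP g0 /ffunP fg.
  have fg_off : forall k, k != k0 -> f k = g k.
    move=> k; case: (unliftP k0 k) => [j -> _|-> /eqP //].
    by have := fg j; rewrite !ffunE.
  apply/ffunP => k; case: (eqVneq k k0) => [->|/fg_off //].
  move: f0; rewrite (bigD1 k0) //= (eq_bigr (fun k => nth 0 S (g k) * c k)).
    move: g0; rewrite (bigD1 k0) //= => g0.
    rewrite -[RHS]g0 => /addIr /(mulIf ck0_neq0) /eqP.
    by rewrite nth_uniq // => /eqP /val_inj.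
  by move=> i /fg_off ->.
have n_gt0 : (0 < n)%N by apply: leq_ltn_trans (ltn_ord k0).
rewrite -[X in (_ ^ X)%N](prednK n_gt0) expnS mulnC leq_mul2l -(card_in_imset restr_inj).
by rewrite (leq_trans (max_card _)) ?card_ffun ?card_ord ?orbT.
Qed.

End FieldMatrices.

Lemma card_bigcup_leq (T : finType) r (A : 'I_r -> {set T}) :
  (#|\bigcup_(l < r) A l| <= \sum_(l < r) #|A l|)%N.
Proof.
elim/big_rec2: _ => [|l k B _ IH]; first by rewrite cards0.
exact: leq_trans (leq_card_setU _ _) (leq_add _ IH).
Qed.

Lemma tensor_comb_sym (R : realType) n r (U : 'M[R[i]]_(n, r)) (T : tensor3 R n)
    (alpha : 'I_n -> R[i]) :
  (forall a b c, T a b c = \sum_(l < r) U a l * U b l * U c l) ->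
  tensor_comb T alpha = U *m diag_mx ((\row_k alpha k) *m U) *m U^T.
Proof.
move=> defT; apply/matrixP => a b.
rewrite /tensor_comb summxE !mxE.
under eq_bigr => k _ do rewrite !mxE defT mulr_sumr.
rewrite exchange_big /=; apply: eq_bigr => l _.
rewrite mul_mx_diag !mxE mulr_sumr mulr_suml; apply: eq_bigr => k _.
by rewrite !mxE; ring.
Qed.

Lemma good_event_sym_diag (R : realType) n r (U : 'M[R[i]]_(n, r)) (b : 'rV_r) :
  \rank U = r -> (forall l, b 0 l != 0) -> good_event U (U *m diag_mx b *m U^T).
Proof.
move=> rankU b_neq0 s P d Q [rankM _ unitP _ defM].
have MU := eqmx_mul_diag_trmx rankU b_neq0.
have PM := eqmx_left_factor rankM (etrans defM (esym (mulmxA _ _ _))).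
have MMT : (U *m diag_mx b *m U^T)^T = U *m diag_mx b *m U^T.
  by rewrite !trmx_mul trmxK tr_diag_mx mulmxA.
rewrite MMT in PM; split => //; last exact/eqmxP/(eqmx_trans PM MU).
by rewrite -rankM MU mxrank_tr.
Qed.

Theorem theorem4p3 (R : realType) (n r : nat) (U : 'M[R[i]]_(n, r))
  (T : tensor3 R n) (S : seq R[i]) :
  (forall a b c, T a b c = \sum_(l < r) U a l * U b l * U c l) ->
  \rank U = r ->
  uniq S -> (0 < size S)%N ->
  1 - r%:R / (size S)%:R <=
    #|[set f : {ffun 'I_n -> 'I_(size S)} |
        `[< good_event U (tensor_comb T (fun k => nth 0 S (f k))) >] ]|%:R
      / ((size S) ^ n)%:R :> R.
Proof.
move=> defT rankU uniqS S_gt0; set N := size S; set G := [set f | _].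
pose zero_at l := [set f : {ffun 'I_n -> 'I_N} |
  (\sum_(k < n) nth 0 S (f k) * U k l == 0)%R].
pose B := \bigcup_(l < r) zero_at l.
have notB_sub_G : ~: B \subset G.
  apply/subsetP => f; rewrite !inE => /bigcupP notB; apply/asboolP.
  rewrite (tensor_comb_sym _ defT); apply: good_event_sym_diag => // l.
  rewrite mxE; under eq_bigr do rewrite mxE.
  by apply/eqP => l0; apply: notB; exists l; rewrite // inE l0.
have card_B : (#|B| * N <= r * N ^ n)%N.
  rewrite (leq_trans (leq_mul (card_bigcup_leq _) (leqnn N))) // big_distrl /=.
  have zero_at_small l : (#|zero_at l| * N <= N ^ n)%N.
    have [k0 Uk0l] := full_col_rank_entry_neq0 l rankU.
    exact: (@card_linear_form_eq0 _ _ S (fun k => U k l) k0 uniqS Uk0l).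
  apply: (@leq_trans (\sum_(l < r) N ^ n)); first by apply: leq_sum.
  by rewrite sum_nat_const card_ord.
have card_total : (N ^ n <= #|G| + #|B|)%N.
  have <- : (#|B| + #|~: B| = N ^ n)%N by rewrite cardsC card_ffun !card_ord.
  by rewrite addnC leq_add2r subset_leq_card.
have Nn_gt0 : (0 : R) < (N ^ n)%:R by rewrite ltr0n expn_gt0 S_gt0.
have B_le : #|B|%:R <= r%:R / N%:R * (N ^ n)%:R :> R.
  by rewrite mulrAC ler_pdivlMr ?ltr0n // -!natrM ler_nat.
rewrite ler_pdivlMr // mulrBl mul1r lerBlDr.
by apply: le_trans (lerD (lexx _) B_le); rewrite -natrD ler_nat.
Qed.
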